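(* Let $B$ be a finite set of vincular patterns, let $p\in S_k$ be a prefix pattern and let $\vec v\in\mathbb{N}^{k+1}$. Suppose every permutation $\pi\in A(p,\vec v)$ contains a copy of some $(\sigma,X)\in B$ such that all positions of the head of that copy lie in $\{1,\dots,k\}$ (i.e. the letters of the copy corresponding to the head of $(\sigma,X)$ are among $\pi_1\cdots\pi_k$). Then $\vec v$ is a gap vector for $p$ with respect to $B$.
   Context: For a word $w$ of distinct integers, $\mathrm{red}(w)$ replaces the $i$-th smallest letter by $i$; $u\sim w$ means $\mathrm{red}(u)=\mathrm{red}(w)$. A vincular pattern of length $\ell$ is a pair $(\sigma,X)$ with $\sigma\in S_\ell$ and $X\subseteq[\ell-1]$. A permutation $\pi\in S_n$ contains $(\sigma,X)$ if there are indices $i_1<\dots<i_\ell$ with $\mathrm{red}(\pi_{i_1}\cdots\pi_{i_\ell})=\sigma$ and $i_{x+1}=i_x+1$ for every $x\in X$; the subsequence $\pi_{i_1}\cdots\pi_{i_\ell}$ is a copy. $\pi$ avoids a set $B$ of such patterns if it contains none of them. The head of $(\sigma,X)$ is the pattern formed by its first $m+1$ letters, $(\mathrm{red}(\sigma_1\cdots\sigma_{m+1}),X)$, where $m=\max X$ ($m=0$ if $X=\emptyset$). For a word $w\in[n]^k$ with distinct letters, let $c_i$ be its $i$-th smallest letter, $c_0=0$, $c_{k+1}=n+1$; the spacing vector $\vec g(n,w)\in\mathbb{N}^{k+1}$ has $i$-th component $c_i-c_{i-1}-1$. For $p\in S_k$ and such $w$ with $\mathrm{red}(w)=p$, let $S_n^B(p;w)$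 be the set of $B$-avoiding $\pi\in S_n$ with $\pi_i=w_i$ for $1\le i\le k$. A vector $\vec v\in\mathbb{N}^{k+1}$ is a gap vector for $p$ with respect to $B$ if for every $n$ and every such $w$ with $\vec g(n,w)\ge\vec v$ (componentwise), $S_n^B(p;w)=\emptyset$. Finally, $A(p,\vec v)$ is the set of permutations $\pi\in S_{k+|\vec v|}$ (where $|\vec v|$ is the sum of the components) with $\pi_1\cdots\pi_k\sim p$ and $\vec g(k+|\vec v|,\pi_1\cdots\pi_k)=\vec v$. *)

(* Permutations and words are sequences of naturals;
   positions are 0-indexed internally (position i here = position i+1 in the paper). *)
From mathcomp Require Import all_boot.
Set Implicit Arguments. Unset Strict Implicit. Unset Printing Implicit Defensive.

Definition is_perm (n : nat) (s : seq nat) : bool := perm_eq s (iota 1 n).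

(* red(w): replace the i-th smallest letter by i (w has distinct letters) *)
Definition red (w : seq nat) : seq nat :=
  [seq (count (fun y => y < x) w).+1 | x <- w].

(* a vincular pattern (sigma, X), sigma in S_l, X subset of [l-1] *)
Definition vpat := (seq nat * seq nat)%type.
Definition vsig (P : vpat) : seq nat := P.1.
Definition vX (P : vpat) : seq nat := P.2.

Definition wf_vpat (P : vpat) : bool :=
  is_perm (size (vsig P)) (vsig P) && all (fun x => 0 < x < size (vsig P)) (vX P).

(* I = (i_1 < ... < i_l) (0-indexed) gives a copy of P in pi:
   red(pi_{i_1} ... pi_{i_l}) = sigma and i_{x+1} = i_x + 1 for all x in X *)
Definition is_copy (pi : seq nat) (P : vpat) (I : seq nat) : bool :=
  [&& sorted ltn I, size I == size (vsig P), all (fun i => i < size pi) I,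
      red [seq nth 0 pi i | i <- I] == vsig P
    & all (fun x => nth 0 I x == (nth 0 I x.-1).+1) (vX P)].

Definition contains (pi : seq nat) (P : vpat) : Prop := exists I, is_copy pi P I.

Definition avoids (pi : seq nat) (B : seq vpat) : Prop :=
  forall P, P \in B -> ~ contains pi P.

(* m = max X (0 if X empty); the head consists of the first m+1 letters *)
Definition head_len (P : vpat) : nat := (foldr maxn 0 (vX P)).+1.

(* spacing vector g(n,w): components c_i - c_{i-1} - 1, i = 1..k+1,
   with c_0 = 0, c_{k+1} = n+1, c_1 < ... < c_k the letters of w *)
Definition gvec (n : nat) (w : seq nat) : seq nat :=
  pairmap (fun a b => b - a - 1) 0 (rcons (sort leq w) n.+1).

Definition word_in (n k : nat) (w : seq nat) : bool :=
  [&& size w == k, uniq w & all (fun x => 0 < x <= n) w].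

Definition SnB (n : nat) (B : seq vpat) (p w : seq nat) (pi : seq nat) : Prop :=
  [/\ is_perm n pi, avoids pi B & take (size p) pi = w].

Definition gap_vector (B : seq vpat) (p v : seq nat) : Prop :=
  forall (n : nat) (w : seq nat),
    word_in n (size p) w -> red w = p -> all2 leq v (gvec n w) ->
    forall pi, ~ SnB n B p w pi.

Definition in_A (p v : seq nat) (pi : seq nat) : Prop :=
  let N := size p + sumn v in
  [/\ is_perm N pi, red (take (size p) pi) = p & gvec N (take (size p) pi) = v].

(* Fix the prefix length k = size p.  We show, by induction on n, that every
   pi in S_n whose prefix pi_1..pi_k reduces to p and has spacing vector
   g >= v contains a copy of some pattern of B whose head lies in the prefix;
   such a pi is then not B-avoiding, which is the gap-vector property.
   - If g = v, then pi is in A(p, v) and the hypothesis applies directly.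
   - Otherwise some gap of the prefix exceeds the corresponding entry of v, so
     it contains a value x which is not a prefix letter and whose removal
     keeps g >= v.  Deleting x from pi and standardizing yields pi' in S_(n-1)
     with the same prefix pattern and g(pi') >= v.
   - By induction pi' has a copy with head in the prefix.  Re-inserting x
     after the prefix shifts some positions of the copy by one, but keeps the
     relative order of its letters, and keeps every adjacency constraint,
     since those only involve head positions, which are in the prefix. *)

From mathcomp Require Import all_boot zify.
Set Implicit Arguments. Unset Strict Implicit. Unset Printing Implicit Defensive.

Lemma is_permP n s : is_perm n s <-> uniq s /\ (forall y, y \in s = (0 < y <= n)).
Proof.
rewrite /is_perm; split.
  move=> H; split; first by rewrite (perm_uniq H) iota_uniq.
  by move=> y; rewrite (perm_mem H) mem_iota add1n ltnS.
case=> U M; apply: uniq_perm => //; first exact: iota_uniq.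
by move=> y; rewrite M mem_iota add1n ltnS.
Qed.

Lemma size_is_perm n s : is_perm n s -> size s = n.
Proof. by move/perm_size; rewrite size_iota. Qed.

Lemma prefix_word n k pi : is_perm n pi ->
  uniq (take k pi) /\ all (fun y => 0 < y <= n) (take k pi).
Proof.
move=> /is_permP [U M]; split; first exact: take_uniq.
by apply/allP => y /mem_take; rewrite M.
Qed.

Lemma uniq_remove (x : nat) a b :
  uniq (a ++ x :: b) -> uniq (a ++ b) /\ x \notin a ++ b.
Proof.
rewrite uniq_catC /= mem_cat => /andP [H1 H2].
by rewrite uniq_catC H2 mem_cat orbC.
Qed.

(* Standardization after deleting the value x: values above x move down by one. *)
Definition unshift (x y : nat) : nat := if x < y then y.-1 else y.

Lemma unshift_lt x y z : y != x -> z != x -> (unshift x y < unshift x z) = (y < z).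
Proof. by rewrite /unshift => Hy Hz; do 2 case: ifP => ?; apply/idP/idP; lia. Qed.

Lemma unshift_inj x y z : y != x -> z != x -> unshift x y = unshift x z -> y = z.
Proof. by rewrite /unshift => Hy Hz; do 2 case: ifP => ?; lia. Qed.

Lemma red_unshift x u : x \notin u -> red (map (unshift x) u) = red u.
Proof.
move=> Hx; rewrite /red -map_comp; apply/eq_in_map => z Hz /=.
rewrite count_map; congr (_.+1); apply: eq_in_count => y Hy /=.
by apply: unshift_lt; apply: contraNneq Hx => <-.
Qed.

Lemma perm_unshift n x a b :
  is_perm n.+1 (a ++ x :: b) -> is_perm n (map (unshift x) (a ++ b)).
Proof.
move=> /is_permP [Up Mp].
have Hx : 0 < x <= n.+1 by rewrite -Mp mem_cat in_cons eqxx orbT.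
have [Uab Xab] := uniq_remove Up.
have Mab y : y \in a ++ b = (0 < y <= n.+1) && (y != x).
  rewrite -Mp !mem_cat in_cons; case: (eqVneq y x) => [->|_] /=; last by rewrite andbT.
  by rewrite andbF; apply/negbTE; rewrite -mem_cat.
apply/is_permP; split.
  by rewrite map_inj_in_uniq // => y z Hy Hz; apply: unshift_inj;
     apply: contraNneq Xab => <-.
move=> y; apply/mapP/idP => [[z Hz ->]|Hy].
  by move: Hz; rewrite Mab /unshift; case: ifP => ?; lia.
exists (if y < x then y else y.+1); first by rewrite Mab; case: ifP => ?; lia.
by rewrite /unshift; case: (ltnP y x) => ?; [rewrite ifF | rewrite ifT]; lia.
Qed.

Definition gap (a b : nat) : nat := b - a - 1.

Definition gap_without (x a b : nat) : nat :=
  if (a < x) && (x < b) then (gap a b).-1 else gap a b.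

Lemma frame_increasing n w : uniq w -> all (fun y => 0 < y <= n) w ->
  path ltn 0 (rcons (sort leq w) n.+1).
Proof.
move=> U A; rewrite rcons_path; apply/andP; split.
  rewrite (path_sortedE ltn_trans) ltn_sorted_uniq_leq sort_uniq U.
  rewrite sort_sorted ?andbT; last exact: leq_total.
  by rewrite all_sort; apply: sub_all A => y /=; lia.
have := mem_last 0 (sort leq w); rewrite in_cons => /orP [/eqP ->//|].
by rewrite mem_sort => H; move/allP: A => /(_ _ H) /=; lia.
Qed.

Lemma last_increasing a s : path ltn a s -> a + size s <= last a s.
Proof.
elim: s a => [|b s IH] a /=; first lia.
by move=> /andP [H1 /IH]; lia.
Qed.

Lemma sum_gaps a0 s : path ltn a0 s ->
  sumn (pairmap gap a0 s) = last a0 s - a0 - size s.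
Proof.
elim: s a0 => [|b s IH] a0 /=; first lia.
by move=> /andP [H1 H2]; rewrite IH //; have := last_increasing H2; rewrite /gap; lia.
Qed.

Lemma gaps_without_above x a s : x < a -> path ltn a s ->
  pairmap (gap_without x) a s = pairmap gap a s.
Proof.
elim: s a => [|b s IH] a //= Hxa /andP [H1 H2].
by rewrite IH //; [rewrite /gap_without ifF //; lia | lia].
Qed.

Lemma exists_deletable_value a0 s v : path ltn a0 s ->
  all2 leq v (pairmap gap a0 s) -> v != pairmap gap a0 s ->
  exists x, [/\ a0 < x < last a0 s, x \notin s &
                all2 leq v (pairmap (gap_without x) a0 s)].
Proof.
elim: s a0 v => [|b s IH] a0 [|v0 v] //= /andP [H1 H2] /andP [Hv0 Hv] Hne.
have Hmin := order_path_min ltn_trans H2.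
have Hlast := last_increasing H2.
rewrite /gap in Hv0; case: (ltnP v0 (b - a0 - 1)) => Hc.
  exists a0.+1; split; first lia.
  - rewrite in_cons negb_or; apply/andP; split; first lia.
    by apply/negP => /(allP Hmin); lia.
  - rewrite gaps_without_above //; last lia.
    by rewrite Hv andbT /gap_without /gap; case: ifP => ?; lia.
have Ev0 : v0 = gap a0 b by rewrite /gap; lia.
have Hne' : v != pairmap gap b s by apply: contra Hne => /eqP ->; rewrite Ev0.
have [x [Hx Hxs Hxv]] := IH _ _ H2 Hv Hne'.
exists x; split; first lia.
- by rewrite in_cons negb_or Hxs andbT; lia.
- by rewrite Hxv andbT /gap_without; case: ifP => ?; rewrite /gap; lia.
Qed.

Lemma gaps_unshift x a0 s : a0 != x -> x \notin s -> path ltn a0 s ->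
  pairmap gap (unshift x a0) (map (unshift x) s) = pairmap (gap_without x) a0 s.
Proof.
elim: s a0 => [|b s IH] a0 //= Ha; rewrite in_cons negb_or => /andP [Hb Hs] /andP [H1 H2].
rewrite IH //; last by rewrite eq_sym.
by congr (_ :: _); rewrite /unshift /gap_without /gap; do 3 case: ifP => ?; lia.
Qed.

Lemma sort_unshift x w : x \notin w ->
  sort leq (map (unshift x) w) = map (unshift x) (sort leq w).
Proof.
move=> Hx; apply: (@homo_sort_map_in _ _ (fun y => y != x)).
- by move=> a b Ha Hb /=; rewrite /unshift; do 2 case: ifP => ?; lia.
- by move=> a b c Ha Hb Hc /=; rewrite /unshift; do 3 case: ifP => ?; lia.
- by move=> a b _ _; exact: leq_total.
- by move=> a b Ha Hb /=; rewrite /unshift; do 2 case: ifP => ?; lia.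
- by apply/allP => y Hy /=; apply: contraNneq Hx => <-.
Qed.

Lemma gvec_unshift n x w : 0 < x <= n.+1 -> x \notin w -> uniq w ->
  all (fun y => 0 < y <= n.+1) w ->
  gvec n (map (unshift x) w) = pairmap (gap_without x) 0 (rcons (sort leq w) n.+2).
Proof.
move=> Hx Hw U A; rewrite /gvec sort_unshift //.
have -> : rcons (map (unshift x) (sort leq w)) n.+1 =
          map (unshift x) (rcons (sort leq w) n.+2).
  by rewrite map_rcons /unshift ifT //; lia.
rewrite -(gaps_unshift (a0 := 0)) //.
- by rewrite neq_ltn; lia.
- by rewrite mem_rcons in_cons negb_or mem_sort Hw andbT; lia.
- exact: frame_increasing.
Qed.

(* The index map of a word after inserting a letter at position q. *)
Definition skip (q j : nat) : nat := if j < q then j else j.+1.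

Lemma nth_skip a b (x : nat) j : nth 0 (a ++ x :: b) (skip (size a) j) = nth 0 (a ++ b) j.
Proof.
rewrite /skip !nth_cat; case: (ltnP j (size a)) => H; first by rewrite H.
by rewrite ifF ?subSn //; lia.
Qed.

Lemma adjacency_in_head P y : y \in vX P -> y < head_len P.
Proof.
rewrite /head_len ltnS; elim: (vX P) => [|z X IH] //=.
rewrite in_cons => /orP [/eqP ->|/IH Hy]; first exact: leq_maxl.
by apply: leq_trans Hy _; exact: leq_maxr.
Qed.

Lemma lift_copy a b x k P I : k <= size a -> x \notin a ++ b -> wf_vpat P ->
  is_copy (map (unshift x) (a ++ b)) P I ->
  all (fun i => i < k) (take (head_len P) I) ->
  is_copy (a ++ x :: b) P (map (skip (size a)) I) /\
  all (fun i => i < k) (take (head_len P) (map (skip (size a)) I)).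
Proof.
move=> Hk Hx /andP [_ /allP HX] /and5P [Hs /eqP Hsz Ha /eqP Hr /allP Had] Hh.
have Hhead i : i < head_len P -> i < size I -> nth 0 I i < k.
  move=> Hi1 Hi2; apply: (allP Hh); rewrite -(nth_take 0 Hi1).
  by apply: mem_nth; rewrite size_take; case: ifP.
have Hin i : i \in I -> i < size (a ++ b) by move/(allP Ha); rewrite size_map.
split; last first.
  by rewrite -map_take all_map; apply: sub_all Hh => i /= Hi; rewrite /skip (leq_trans Hi Hk).
apply/and5P; split.
- by rewrite sorted_map; apply: sub_sorted Hs => i j /=; rewrite /skip; do 2 case: ifP => ?; lia.
- by rewrite size_map Hsz.
- rewrite all_map; apply/allP => i /Hin /=.
  by rewrite !size_cat /= /skip; case: ifP => ?; lia.
- have Hletters : map (nth 0 (a ++ x :: b) \o skip (size a)) I = map (nth 0 (a ++ b)) I.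
    by apply/eq_in_map => i _ /=; rewrite nth_skip.
  have HxI : x \notin map (nth 0 (a ++ b)) I.
    by apply/mapP => [[i /Hin Hi E]]; move: Hx; rewrite E mem_nth.
  rewrite -map_comp Hletters -(red_unshift HxI) -Hr -map_comp.
  by apply/eqP; congr red; apply/eq_in_map => i /Hin Hi /=; rewrite (nth_map 0).
- apply/allP => y Hy; move: (Had _ Hy) (HX _ Hy) => /eqP E /andP [Hy1 Hy2].
  have Hyh := adjacency_in_head Hy.
  rewrite !(nth_map 0) ?Hsz; try lia.
  have := Hhead _ Hyh ltac:(lia); have := Hhead y.-1 ltac:(lia) ltac:(lia).
  by rewrite /skip E => ? ?; rewrite !ifT //; lia.
Qed.

Lemma in_A_of_gvec p v n pi : is_perm n pi -> red (take (size p) pi) = p ->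
  size p <= n -> v = gvec n (take (size p) pi) -> in_A p v pi.
Proof.
move=> Hp Hr Hk Ev.
have [U A] := prefix_word (size p) Hp.
rewrite /in_A; have -> : size p + sumn v = n.
  rewrite Ev /gvec sum_gaps; last exact: frame_increasing.
  by rewrite last_rcons size_rcons size_sort size_takel ?(size_is_perm Hp); lia.
by split.
Qed.

Lemma delete_value n k v pi : is_perm n.+1 pi -> k <= n.+1 ->
  all2 leq v (gvec n.+1 (take k pi)) -> v != gvec n.+1 (take k pi) ->
  exists a x b, pi = a ++ x :: b /\ [/\ k <= size a, x \notin a ++ b,
    is_perm n (map (unshift x) (a ++ b)),
    red (take k (map (unshift x) (a ++ b))) = red (take k pi) &
    all2 leq v (gvec n (take k (map (unshift x) (a ++ b))))].
Proof.
move=> Hp Hk Hv Hne.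
have [U A] := prefix_word k Hp.
have [x [Hx Hxw Hxv]] := exists_deletable_value (frame_increasing U A) Hv Hne.
move: Hx Hxw; rewrite last_rcons mem_rcons in_cons negb_or mem_sort => Hx /andP [_ Hxw].
have /is_permP [Up Mp] := Hp.
have Hxpi : x \in pi by rewrite Mp; lia.
move: Hp Up Hxw U A Hxv; case/splitPr: Hxpi => a b Hp Up Hxw U A Hxv.
have [_ Xab] := uniq_remove Up.
have Hxa : x \notin a by apply: contra Xab; rewrite mem_cat => ->.
have Hka : k <= size a.
  move: Hxw; rewrite in_take; last by rewrite mem_cat mem_head orbT.
  by rewrite index_cat (negbTE Hxa) /= eqxx addn0 ltnNge negbK.
have Htake c : take k (a ++ c) = take k a by exact: takel_cat.
exists a, x, b; split => //; split => //.
- exact: perm_unshift.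
- by rewrite -map_take Htake red_unshift // -(Htake (x :: b)).
- by rewrite -map_take Htake gvec_unshift -?(Htake (x :: b)) //; lia.
Qed.

Definition head_in_prefix_copy (B : seq vpat) (k : nat) (pi : seq nat) : Prop :=
  exists P I, [/\ P \in B, is_copy pi P I & all (fun i => i < k) (take (head_len P) I)].

Lemma dominated_spacing_copy B p v : all wf_vpat B ->
  (forall pi, in_A p v pi -> head_in_prefix_copy B (size p) pi) ->
  forall n pi, is_perm n pi -> red (take (size p) pi) = p -> size p <= n ->
  all2 leq v (gvec n (take (size p) pi)) -> head_in_prefix_copy B (size p) pi.
Proof.
move=> HB HA n; elim: n => [|n IH] pi Hp Hr Hk Hv.
  have Epi : pi = [::] by apply: size0nil; exact: size_is_perm Hp.
  apply: HA; apply: (in_A_of_gvec Hp Hr Hk); move: Hv; rewrite Epi.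
  by case: (v) => [|? [|? ?]] //=; rewrite ?andbF // leqn0 andbT => /eqP ->.
have [Ev|Hne] := eqVneq v (gvec n.+1 (take (size p) pi)).
  by apply: HA; apply: (in_A_of_gvec Hp Hr Hk).
have [a [x [b [Epi [Hka Xab Hp' Hr' Hv']]]]] := delete_value Hp Hk Hv Hne.
have Hk' : size p <= n by have := size_is_perm Hp; rewrite Epi size_cat /=; lia.
have [P [I [HPB HI HIh]]] := IH _ Hp' (etrans Hr' Hr) Hk' Hv'.
have [HC HCh] := lift_copy Hka Xab (allP HB _ HPB) HI HIh.
by rewrite Epi; exists P, (map (skip (size a)) I).
Qed.

Theorem mainTheorem1 (B : seq vpat) (p v : seq nat) :
  all wf_vpat B ->
  is_perm (size p) p ->
  size v = (size p).+1 ->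
  (forall pi, in_A p v pi ->
     exists P I, [/\ P \in B, is_copy pi P I &
                     all (fun i => i < size p) (take (head_len P) I)]) ->
  gap_vector B p v.
Proof.
move=> HB _ _ HA n w Hw Hrw Hv pi [Hp Hav Ht].
have Hk : size p <= n.
  move: Hw => /and3P [/eqP Hsw _ _].
  by rewrite -(size_is_perm Hp) -Hsw -Ht size_take; case: ifP; lia.
rewrite -Ht in Hrw Hv.
have [P [I [HPB HI _]]] := dominated_spacing_copy HB HA Hp Hrw Hk Hv.
by apply: (Hav P HPB); exists I.
Qed.
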